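(* Let $k\ge1$, let $Z^j\in\mathbb{R}^{n\times m_j}$ with $m_j\ge1$ for $j=1,\dots,k$, let $Z=[Z^1,\dots,Z^k]\in\mathbb{R}^{n\times m}$ with $m=\sum_j m_j$, and let $\epsilon>0$. Then $$\sum_{j=1}^k\frac{m_j}{2}\log\det\left(I+\frac{n}{m_j\epsilon^2}Z^j(Z^j)^{*}\right)\le\frac{m}{2}\log\det\left(I+\frac{n}{m\epsilon^2}ZZ^{*}\right)\le\sum_{j=1}^k\frac{m}{2}\log\det\left(I+\frac{n}{m\epsilon^2}Z^j(Z^j)^{*}\right).$$ The first inequality is an equality if and only if $\frac{Z^1(Z^1)^*}{m_1}=\frac{Z^2(Z^2)^*}{m_2}=\cdots=\frac{Z^k(Z^k)^*}{m_k}$, and the second inequality is an equality if and only if $(Z^{j_1})^{*}Z^{j_2}=0$ for all $1\le j_1<j_2\le k$.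
   Context: $^{*}$ denotes transpose; $I$ denotes the $n\times n$ identity. *)

From HB Require Import structures.
From mathcomp Require Import all_boot all_order all_algebra.
From mathcomp Require Import all_classical all_reals all_analysis.
Set Implicit Arguments. Unset Strict Implicit. Unset Printing Implicit Defensive.
Import Order.TTheory GRing.Theory Num.Theory.
Local Open Scope ring_scope.

Definition logdet_rate (R : realType) (n p : nat) (eps : R) (A : 'M[R]_(n, p)) : R :=
  ln (\det (1%:M + (n%:R / (p%:R * eps ^+ 2)) *: (A *m A^T))).

From HB Require Import structures.
From mathcomp Require Import all_boot all_order all_algebra.
From mathcomp Require Import all_classical all_reals all_analysis.
From mathcomp Require Import ring lra.
Import Order.TTheory GRing.Theory Num.Theory.
Local Open Scope ring_scope.
Set Implicit Arguments. Unset Strict Implicit. Unset Printing Implicit Defensive.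

(* Both inequalities reduce to facts about determinants of positive definite
   matrices, proved by induction on the dimension through the Schur complement of
   the first diagonal entry.  With weights [m_j / m], the middle term is [ln det] of
   the weighted mean of the matrices [I + n / (m_j eps^2) Z_j Z_j^T]; strict
   concavity of [ln det] gives the left inequality, with equality exactly when these
   matrices coincide.  The right inequality is the subadditivity
   [det (I + G + c Z Z^T) <= det (I + G) det (I + c Z Z^T)] for positive
   semidefinite [G], with equality iff [G Z = 0]: Sylvester's identity
   [det (I + X Y) = det (I + Y X)] moves both sides to [Z^T Z]-sized matrices, which
   differ by a positive semidefinite matrix.  Adding the blocks [Z_j] one at a time
   yields the pairwise orthogonality condition. *)

(** * Positive semidefinite matrices *)

Section SemidefiniteMatrices.
Variable R : realFieldType.

Definition qform n (A : 'M[R]_n) (x : 'cV[R]_n) : R := (x^T *m A *m x) 0 0.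
Definition sqnorm n (x : 'cV[R]_n) : R := qform 1%:M x.
Definition psdmx n (A : 'M[R]_n) := A^T = A /\ forall x, 0 <= qform A x.
Definition pdmx n (A : 'M[R]_n) := A^T = A /\ forall x, x != 0 -> 0 < qform A x.

Lemma qform0 n (x : 'cV[R]_n) : qform 0 x = 0.
Proof. by rewrite /qform mulmx0 mul0mx mxE. Qed.

Lemma qformD n (A B : 'M[R]_n) x : qform (A + B) x = qform A x + qform B x.
Proof. by rewrite /qform mulmxDr mulmxDl mxE. Qed.

Lemma qformB n (A B : 'M[R]_n) x : qform (A - B) x = qform A x - qform B x.
Proof. by rewrite /qform mulmxBr mulmxBl !mxE. Qed.

Lemma qformZ n (A : 'M[R]_n) c x : qform (c *: A) x = c * qform A x.
Proof. by rewrite /qform -scalemxAr -scalemxAl mxE. Qed.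

Lemma qform_sum n (I : Type) (r : seq I) (P : pred I) (F : I -> 'M[R]_n) x :
  qform (\sum_(i <- r | P i) F i) x = \sum_(i <- r | P i) qform (F i) x.
Proof. by rewrite /qform mulmx_sumr mulmx_suml summxE. Qed.

Lemma qform_conj n p (A : 'M[R]_n) (B : 'M[R]_(n, p)) x :
  qform (B^T *m A *m B) x = qform A (B *m x).
Proof. by rewrite /qform trmx_mul !mulmxA. Qed.

Lemma qform_gram n p (Z : 'M[R]_(n, p)) x : qform (Z *m Z^T) x = sqnorm (Z^T *m x).
Proof. by rewrite /sqnorm -qform_conj trmxK mulmx1. Qed.

Lemma sqnormE n (x : 'cV[R]_n) : sqnorm x = \sum_i x i 0 ^+ 2.
Proof.
by rewrite /sqnorm /qform mulmx1 mxE; apply: eq_bigr => i _; rewrite mxE expr2.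
Qed.

Lemma sqnorm_ge0 n (x : 'cV[R]_n) : 0 <= sqnorm x.
Proof. by rewrite sqnormE sumr_ge0 // => i _; rewrite sqr_ge0. Qed.

Lemma sqnorm_eq0 n (x : 'cV[R]_n) : (sqnorm x == 0) = (x == 0).
Proof.
apply/idP/eqP => [|->]; last by rewrite /sqnorm /qform mulmx0 mxE.
rewrite sqnormE psumr_eq0 => [/allP x0|i _]; last by rewrite sqr_ge0.
apply/matrixP => i j; rewrite (ord1 j) mxE.
by have := x0 i (mem_index_enum _); rewrite sqrf_eq0 => /eqP.
Qed.

Lemma sqnorm_gt0 n (x : 'cV[R]_n) : x != 0 -> 0 < sqnorm x.
Proof. by rewrite lt_def sqnorm_eq0 sqnorm_ge0 andbT. Qed.

Lemma mx_eq0_cV m n (A : 'M[R]_(m, n)) : (forall x : 'cV_n, A *m x = 0) -> A = 0.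
Proof.
move=> A0; apply: trmx_inj; apply/row_matrixP => j.
by rewrite -tr_col colE A0 !trmx0 row0.
Qed.

Lemma rV_eq0 n (u : 'rV[R]_n) : (forall y : 'cV_n, (u *m y) 0 0 = 0) -> u = 0.
Proof.
move=> u0; apply: mx_eq0_cV => y; rewrite [u *m y]mx11_scalar u0.
by apply/matrixP => i j; rewrite !mxE mul0rn.
Qed.

Lemma qform_add n (A : 'M[R]_n) x y : A^T = A ->
  qform A (x + y) = qform A x + 2 * (x^T *m A *m y) 0 0 + qform A y.
Proof.
move=> sA; have yAx : (y^T *m A *m x) 0 0 = (x^T *m A *m y) 0 0.
  have -> : (y^T *m A *m x) 0 0 = (y^T *m A *m x)^T 0 0 by rewrite [RHS]mxE.
  by rewrite !trmx_mul trmxK sA mulmxA.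
have addE (B C : 'M[R]_1) : (B + C) 0 0 = B 0 0 + C 0 0 by rewrite mxE.
by rewrite /qform mulmxDr (linearD trmx) /= !mulmxDl !addE yAx; ring.
Qed.

Lemma qform_scale n (A : 'M[R]_n) t x : qform A (t *: x) = t ^+ 2 * qform A x.
Proof. by rewrite /qform -scalemxAr linearZ /= -!scalemxAl scalerA mxE expr2. Qed.

Lemma psdmx_qform_eq0 n (A : 'M[R]_n) x : psdmx A -> qform A x = 0 -> A *m x = 0.
Proof.
move=> [sA pA] Ax0; apply: trmx_inj; rewrite trmx_mul sA trmx0; apply: rV_eq0 => y.
set b := (x^T *m A *m y) 0 0; set q := qform A y.
have q_ge0 : 0 <= q := pA y.
set s := (q + 1)^-1; have s_gt0 : 0 < s by rewrite invr_gt0 ltr_wpDl.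
have sq_lt1 : s * q < 1 by rewrite mulrC ltr_pdivrMr ?ltr_wpDl // mul1r ltrDl.
(* With [b = x^T A y], moving from [x] by [- b s] along [y] makes the form [<= - b^2 s]. *)
have := pA (x + (- (b * s)) *: y).
rewrite qform_add // qform_scale Ax0 -scalemxAr mxE -/b -/q => ge0.
have : b ^+ 2 * s <= 0 by nra.
by rewrite pmulr_lle0 // => b2_le0; apply/eqP; rewrite -sqrf_eq0 eq_le b2_le0 sqr_ge0.
Qed.

Lemma psdmx_gram n p (Z : 'M[R]_(n, p)) : psdmx (Z *m Z^T).
Proof. by split=> [|x]; rewrite ?trmx_mul ?trmxK // qform_gram sqnorm_ge0. Qed.

Lemma psdmxZ n c (A : 'M[R]_n) : 0 <= c -> psdmx A -> psdmx (c *: A).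
Proof. by move=> c0 [sA pA]; split=> [|x]; rewrite ?linearZ /= ?sA // qformZ mulr_ge0. Qed.

Lemma psdmxD n (A B : 'M[R]_n) : psdmx A -> psdmx B -> psdmx (A + B).
Proof.
by move=> [sA pA] [sB pB]; split=> [|x]; rewrite ?linearD /= ?sA ?sB // qformD addr_ge0.
Qed.

Lemma psdmx_sum n (I : Type) (r : seq I) (P : pred I) (F : I -> 'M[R]_n) :
  (forall i, P i -> psdmx (F i)) -> psdmx (\sum_(i <- r | P i) F i).
Proof.
move=> F_psd; apply: (big_ind (@psdmx n)) => //; last exact: psdmxD.
by split=> [|x]; rewrite ?trmx0 ?qform0.
Qed.

Lemma psdmx_conj n p (A : 'M[R]_n) (B : 'M[R]_(n, p)) :
  psdmx A -> psdmx (B^T *m A *m B).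
Proof.
move=> [sA pA]; split=> [|x]; last by rewrite qform_conj.
by rewrite !trmx_mul trmxK sA mulmxA.
Qed.

Lemma pdmx_psdmx n (A : 'M[R]_n) : pdmx A -> psdmx A.
Proof.
move=> [sA pA]; split=> // x; have [->|x0] := eqVneq x 0; last exact/ltW/pA.
by rewrite /qform mulmx0 mxE.
Qed.

Lemma pdmxD_psd n (A B : 'M[R]_n) : pdmx A -> psdmx B -> pdmx (A + B).
Proof.
move=> [sA pA] [sB pB]; split=> [|x x0]; first by rewrite linearD /= sA sB.
by rewrite qformD ltr_pwDl ?pA.
Qed.

Lemma pdmx1D n (G : 'M[R]_n) : psdmx G -> pdmx (1%:M + G).
Proof. by apply: pdmxD_psd; split=> [|x x0]; rewrite ?trmx1 // sqnorm_gt0. Qed.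

Lemma pdmxZ n c (A : 'M[R]_n) : 0 < c -> pdmx A -> pdmx (c *: A).
Proof.
by move=> c_gt0 [sA pA]; split=> [|x x0]; rewrite ?linearZ /= ?sA // qformZ mulr_gt0 ?pA.
Qed.

Lemma pdmx_wsum n (I : finType) (w : I -> R) (A : I -> 'M[R]_n) (i0 : I) :
  (forall i, 0 < w i) -> (forall i, pdmx (A i)) -> pdmx (\sum_i w i *: A i).
Proof.
move=> w_gt0 pdA; rewrite (bigD1 i0) //=; apply: pdmxD_psd; first exact: pdmxZ.
by apply: psdmx_sum => i _; apply/psdmxZ/pdmx_psdmx; rewrite ?ltW.
Qed.

(** * Schur complements *)

Definition symblk n (a : R) (r : 'rV[R]_n) (D : 'M[R]_n) : 'M[R]_(1 + n) :=
  block_mx a%:M r r^T D.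

Definition schur n (a : R) (r : 'rV[R]_n) (D : 'M[R]_n) : 'M[R]_n :=
  D - a^-1 *: (r^T *m r).

Lemma symblkE n (A : 'M[R]_(1 + n)) : A^T = A ->
  A = symblk (ulsubmx A 0 0) (ursubmx A) (drsubmx A).
Proof. by move=> sA; rewrite /symblk -mx11_scalar trmx_ursub sA submxK. Qed.

Lemma symblkP n (A : 'M[R]_(1 + n)) : A^T = A -> exists a r D, A = symblk a r D.
Proof. by move=> /symblkE ->; do 3 eexists. Qed.

Lemma symblk_sym n a (r : 'rV[R]_n) D : (symblk a r D)^T = symblk a r D -> D^T = D.
Proof. by rewrite /symblk tr_block_mx => /eq_block_mx[_ _ _]. Qed.

Lemma symblkD n a b (r u : 'rV[R]_n) D V :
  symblk a r D + symblk b u V = symblk (a + b) (r + u) (D + V).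
Proof. by rewrite /symblk add_block_mx raddfD /= linearD. Qed.

Lemma symblkZ n c a (r : 'rV[R]_n) D :
  c *: symblk a r D = symblk (c * a) (c *: r) (c *: D).
Proof. by rewrite /symblk scale_block_mx scale_scalar_mx linearZ. Qed.

Lemma symblk_wsum n (I : finType) (w a : I -> R) (r : I -> 'rV[R]_n) D :
  \sum_i w i *: symblk (a i) (r i) (D i) =
  symblk (\sum_i w i * a i) (\sum_i w i *: r i) (\sum_i w i *: D i).
Proof.
under eq_bigr do rewrite symblkZ.
elim: (index_enum I) => [|i s IH]; last by rewrite !big_cons IH symblkD.
by rewrite !big_nil /symblk raddf0 trmx0 block_mx0.
Qed.

Lemma schur_sym n a (r : 'rV[R]_n) D : D^T = D -> (schur a r D)^T = schur a r D.
Proof. by move=> sD; rewrite /schur linearB linearZ /= trmx_mul trmxK sD. Qed.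

Lemma qform_symblk n a (r : 'rV[R]_n) D t y :
  qform (symblk a r D) (col_mx t%:M y) = a * t ^+ 2 + 2 * t * (r *m y) 0 0 + qform D y.
Proof.
rewrite /qform /symblk tr_col_mx tr_scalar_mx mul_row_block mul_row_col !mulmxDl.
rewrite -trmx_mul -[t%:M *m r *m y]mulmxA.
move: (r *m y) (y^T *m D *m y) => u v.
rewrite !mxE !big_ord1 !mxE !big_ord1 !mxE /= !mulr1n.
change (ord0 : 'I_1) with (0 : 'I_1); ring.
Qed.

Lemma qform_schur n a (r : 'rV[R]_n) D y :
  qform (schur a r D) y = qform D y - a^-1 * (r *m y) 0 0 ^+ 2.
Proof.
rewrite qformB qformZ; congr (_ - _ * _).
rewrite /qform !mulmxA -trmx_mul -mulmxA; move: (r *m y) => u.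
by rewrite !mxE big_ord1 mxE expr2.
Qed.

(* The Schur complement is the minimum of the quadratic form over the first coordinate. *)
Lemma qform_schur_min n a (r : 'rV[R]_n) D y : a != 0 ->
  qform (symblk a r D) (col_mx (- ((r *m y) 0 0 / a))%:M y) = qform (schur a r D) y.
Proof. by move=> a0; rewrite qform_symblk qform_schur; field. Qed.

Lemma qform_schur_le n a (r : 'rV[R]_n) D t y : 0 < a ->
  qform (schur a r D) y <= qform (symblk a r D) (col_mx t%:M y).
Proof.
move=> a_gt0; rewrite qform_symblk qform_schur.
set b := (r *m y) 0 0; set d := qform D y.
have -> : a * t ^+ 2 + 2 * t * b + d = a * (t + b / a) ^+ 2 + (d - a^-1 * b ^+ 2).
  by field; rewrite lt0r_neq0.
by rewrite lerDr mulr_ge0 ?sqr_ge0 ?ltW.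
Qed.

Lemma det_symblk n a (r : 'rV[R]_n) D : a != 0 ->
  \det (symblk a r D) = a * \det (schur a r D).
Proof.
move=> a0.
have -> : symblk a r D =
    block_mx 1%:M 0 (a^-1 *: r^T) 1%:M *m block_mx a%:M r 0 (schur a r D).
  rewrite mulmx_block /symblk /schur !mul1mx ?mul0mx ?mulmx0 ?addr0 ?add0r.
  by rewrite -scalemxAl mul_mx_scalar scalerA mulVf // scale1r -scalemxAl addrC subrK.
by rewrite det_mulmx det_lblock det_ublock !det1 det_scalar1 !mul1r.
Qed.

Lemma qform_symblk_e1 n a (r : 'rV[R]_n) D :
  qform (symblk a r D) (col_mx 1%:M 0) = a.
Proof. by rewrite qform_symblk mulmx0 /qform mulmx0 ?mul0mx !mxE expr1n; ring. Qed.

Lemma pdmx_symblk n a (r : 'rV[R]_n) D :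
  pdmx (symblk a r D) -> 0 < a /\ pdmx (schur a r D).
Proof.
move=> [sA pA]; have a_gt0 : 0 < a.
  rewrite -(qform_symblk_e1 a r D) pA // col_mx_eq0 negb_and; apply/orP; left.
  by apply/eqP => /matrixP/(_ 0 0)/eqP; rewrite !mxE /= mulr1n oner_eq0.
split=> //; split=> [|y y0]; first exact: schur_sym (symblk_sym sA).
by rewrite -qform_schur_min ?lt0r_neq0 // pA // col_mx_eq0 negb_and y0 orbT.
Qed.

Lemma psdmx_symblk n s (u : 'rV[R]_n) V :
  psdmx (symblk s u V) -> 0 <= s /\ (s = 0 -> u = 0).
Proof.
move=> psdS; split=> [|s0]; first by rewrite -(qform_symblk_e1 s u V); case: psdS.
have := @psdmx_qform_eq0 _ _ (col_mx 1%:M 0) psdS; rewrite qform_symblk_e1 => /(_ s0).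
rewrite /symblk mul_block_col !mulmx0 !addr0 !mulmx1 => /eqP.
by rewrite col_mx_eq0 trmx_eq0 => /andP[_ /eqP].
Qed.

(** * Determinant inequalities *)

Lemma det_pdmx_gt0 n (A : 'M[R]_n) : pdmx A -> 0 < \det A.
Proof.
elim: n A => [|n IH] A pdA; first by rewrite det_mx00.
have [a [r [D EA]]] := symblkP (proj1 pdA); rewrite EA in pdA *.
have [a_gt0 pd_schur] := pdmx_symblk pdA.
by rewrite det_symblk ?lt0r_neq0 // mulr_gt0 ?IH.
Qed.

(* The Schur complement of [A + S] dominates that of [A], so induction applies to it. *)
Lemma det_psdD n (A S : 'M[R]_n) : pdmx A -> psdmx S ->
  \det A <= \det (A + S) /\ (\det (A + S) = \det A -> S = 0).
Proof.
elim: n A S => [|n IH] A S pdA psdS.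
  by rewrite !det_mx00; split=> // _; apply/matrixP => -[].
have pdAS := pdmxD_psd pdA psdS.
have [a [r [D EA]]] := symblkP (proj1 pdA); have [s [u [V ES]]] := symblkP (proj1 psdS).
rewrite EA ES symblkD in pdA psdS pdAS *.
have [a_gt0 pd_sch] := pdmx_symblk pdA; have [as_gt0 pd_schD] := pdmx_symblk pdAS.
have [s_ge0 u0] := psdmx_symblk psdS.
set P := schur (a + s) (r + u) (D + V) - schur a r D.
have psdP : psdmx P.
  split=> [|y]; first by rewrite linearB /= (proj1 pd_sch) (proj1 pd_schD).
  rewrite qformB subr_ge0 -[qform (schur (a + s) _ _) y]qform_schur_min ?lt0r_neq0 //.
  rewrite -symblkD qformD.
  by rewrite ler_wpDr ?qform_schur_le //; case: psdS.
have [le_det eq_det] := IH _ P pd_sch psdP; rewrite addrC subrK in le_det eq_det.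
have [d_gt0 dD_gt0] := (det_pdmx_gt0 pd_sch, det_pdmx_gt0 pd_schD).
rewrite !det_symblk ?lt0r_neq0 //; split.
  by rewrite ler_pM ?lerDl // ltW.
move=> eq_prod; have s0 : s = 0.
  by apply/eqP; rewrite eq_le s_ge0 andbT; move: eq_prod le_det; nra.
have eq_sch : \det (schur (a + s) (r + u) (D + V)) = \det (schur a r D).
  by apply: (mulfI (lt0r_neq0 a_gt0)); rewrite -eq_prod s0 addr0.
move: (eq_det eq_sch); rewrite /P s0 u0 // !addr0 /schur.
rewrite opprB addrA subrK addrAC subrr add0r => ->.
by rewrite /symblk raddf0 trmx0 block_mx0.
Qed.

Lemma pdmx_unit n (A : 'M[R]_n) : pdmx A -> A \in unitmx.
Proof. by move=> /det_pdmx_gt0 dA; rewrite unitmxE unitfE lt0r_neq0. Qed.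

Lemma pdmx_inv n (A : 'M[R]_n) : pdmx A -> pdmx (invmx A).
Proof.
move=> pdA; have uA := pdmx_unit pdA; have [sA pA] := pdA.
split=> [|x x0]; first by rewrite trmx_inv sA.
have -> : invmx A = (invmx A)^T *m A *m invmx A by rewrite trmx_inv sA mulVmx ?mul1mx.
rewrite qform_conj pA //; apply: contra x0 => /eqP Ax0.
by rewrite -(mulKVmx uA x) Ax0 mulmx0.
Qed.

Lemma det1D_mulmxC n p (X : 'M[R]_(n, p)) (Y : 'M[R]_(p, n)) :
  \det (1%:M + X *m Y) = \det (1%:M + Y *m X).
Proof.
have E1 : block_mx 1%:M X (- Y) 1%:M =
    block_mx 1%:M 0 (- Y) 1%:M *m block_mx 1%:M X 0 (1%:M + Y *m X).
  rewrite mulmx_block ?mul1mx ?mul0mx ?mulmx0 ?addr0 ?add0r ?mulmx1 ?mulNmx.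
  by rewrite addrCA addNr addr0.
have E2 : block_mx 1%:M X (- Y) 1%:M =
    block_mx 1%:M X 0 1%:M *m block_mx (1%:M + X *m Y) 0 (- Y) 1%:M.
  rewrite mulmx_block ?mul1mx ?mul0mx ?mulmx0 ?addr0 ?add0r ?mulmx1 ?mulmxN.
  by rewrite addrK.
have := congr1 determinant E1; rewrite E2 !det_mulmx !det_lblock !det_ublock.
by rewrite !det1 !mul1r !mulr1.
Qed.

Lemma psdmx_invmx1D_mul n (G : 'M[R]_n) : psdmx G -> psdmx (invmx (1%:M + G) *m G).
Proof.
move=> psdG; have [sG _] := psdG; have pdM := pdmx1D psdG; have uM := pdmx_unit pdM.
set M := 1%:M + G in pdM uM *; set Mi := invmx M.
have sMi : Mi^T = Mi by rewrite trmx_inv (proj1 pdM).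
have -> : Mi *m G = Mi^T *m (G + G^T *m G) *m Mi.
  have -> : G + G^T *m G = G *m M by rewrite sG mulmxDr mulmx1.
  by rewrite sMi -!mulmxA mulmxV ?mulmx1.
apply/psdmx_conj/psdmxD => //; by have := psdmx_gram G^T; rewrite trmxK.
Qed.

(* With [M = 1 + G], Sylvester's identity turns both sides into determinants of
   [p x p] matrices, [det M * det (1 + c Z^T M^-1 Z)] and [det (1 + c Z^T Z)], and
   [Z^T Z - Z^T M^-1 Z = Z^T M^-1 G Z] is positive semidefinite. *)
Lemma det1D_add_gram n p (G : 'M[R]_n) (Z : 'M[R]_(n, p)) c : psdmx G -> 0 < c ->
  \det (1%:M + G + c *: (Z *m Z^T)) <= \det (1%:M + G) * \det (1%:M + c *: (Z *m Z^T)) /\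
  (\det (1%:M + G + c *: (Z *m Z^T)) = \det (1%:M + G) * \det (1%:M + c *: (Z *m Z^T))
    <-> G *m Z = 0).
Proof.
move=> psdG c_gt0; set M := 1%:M + G.
have pdM : pdmx M := pdmx1D psdG; have uM := pdmx_unit pdM; set Mi := invmx M.
set Aq := 1%:M + c *: (Z^T *m Mi *m Z); set Sq := c *: (Z^T *m (Mi *m G) *m Z).
have pdAq : pdmx Aq.
  by apply/pdmx1D/psdmxZ/psdmx_conj/pdmx_psdmx/pdmx_inv; rewrite ?ltW.
have psdSq : psdmx Sq by apply/psdmxZ/psdmx_conj/psdmx_invmx1D_mul; rewrite ?ltW.
have detL : \det (M + c *: (Z *m Z^T)) = \det M * \det Aq.
  have -> : M + c *: (Z *m Z^T) = M *m (1%:M + (Mi *m (c *: Z)) *m Z^T).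
    by rewrite mulmxDr mulmx1 !mulmxA mulmxV // mul1mx scalemxAl.
  by rewrite det_mulmx det1D_mulmxC -!scalemxAr mulmxA.
have detR : \det (1%:M + c *: (Z *m Z^T)) = \det (Aq + Sq).
  rewrite scalemxAl det1D_mulmxC -scalemxAr /Aq /Sq -addrA -scalerDr -mulmxDl -mulmxDr.
  by rewrite -{1}[Mi]mulmx1 -mulmxDr mulVmx ?mulmx1.
have [le_det eq_det] := det_psdD pdAq psdSq.
rewrite detL detR; split; first by rewrite ler_pM2l ?det_pdmx_gt0.
split=> [/(mulfI (lt0r_neq0 (det_pdmx_gt0 pdM)))/esym/eq_det Sq0 | GZ0]; last first.
  by rewrite /Sq -!mulmxA GZ0 !mulmx0 scaler0 addr0.
apply: mx_eq0_cV => x; have : qform (Mi *m G) (Z *m x) = 0.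
  by move/eqP: Sq0; rewrite scaler_eq0 gt_eqF //= -qform_conj => /eqP ->; rewrite qform0.
move/(psdmx_qform_eq0 (psdmx_invmx1D_mul psdG))/(congr1 (mulmx M)).
by rewrite mulmx0 !mulmxA mulmxV ?mul1mx -?mulmxA.
Qed.

Lemma gram_sum_mulmx_eq0 n q (I : finType) (P : pred I) (p : I -> nat)
    (Z : forall i, 'M[R]_(n, p i)) (Y : 'M[R]_(n, q)) :
  (\sum_(i | P i) Z i *m (Z i)^T) *m Y = 0 <-> (forall i, P i -> (Z i)^T *m Y = 0).
Proof.
split=> [SY0 i Pi | ZY0]; last first.
  by rewrite mulmx_suml big1 // => i Pi; rewrite -mulmxA ZY0 ?mulmx0.
apply: mx_eq0_cV => x; apply/eqP; rewrite -sqnorm_eq0 -mulmxA -qform_gram.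
have : qform (\sum_(i | P i) Z i *m (Z i)^T) (Y *m x) = 0.
  by rewrite -qform_conj -mulmxA SY0 mulmx0 qform0.
rewrite qform_sum => /eqP; rewrite psumr_eq0 => [/allP/(_ i (mem_index_enum _))|j _].
  by rewrite Pi.
exact: (proj2 (psdmx_gram _)).
Qed.

Lemma det1D_gram_sum_prefix n k (p : 'I_k -> nat) (Z : forall j, 'M[R]_(n, p j)) c :
  0 < c -> forall l, (l <= k)%N ->
  \det (1%:M + c *: \sum_(j < k | (j < l)%N) Z j *m (Z j)^T) <=
    \prod_(j < k | (j < l)%N) \det (1%:M + c *: (Z j *m (Z j)^T)) /\
  (\det (1%:M + c *: \sum_(j < k | (j < l)%N) Z j *m (Z j)^T) =
    \prod_(j < k | (j < l)%N) \det (1%:M + c *: (Z j *m (Z j)^T)) <->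
   forall j1 j2 : 'I_k, (j1 < j2 < l)%N -> (Z j1)^T *m Z j2 = 0).
Proof.
move=> c_gt0; elim=> [_|l IH lt_lk].
  rewrite !big_pred0 // scaler0 addr0 det1; split=> //; split=> // _ j1 j2.
  by rewrite ltn0 andbF.
have [IHle IHeq] := IH (ltnW lt_lk); set jl := Ordinal lt_lk.
have lt_l (j : 'I_k) : ((j < l.+1)%N && (j != jl)) = (j < l)%N.
  by rewrite ltnS leq_eqVlt -val_eqE /=; case: ltngtP.
have jl_lt : (jl < l.+1)%N by rewrite ltnS.
rewrite (bigD1 jl jl_lt) (bigD1 jl jl_lt) /= (eq_bigl _ _ lt_l) [X in _ * X](eq_bigl _ _ lt_l).
set S := \sum_(j < k | (j < l)%N) _ in IHle IHeq *.
set P := \prod_(j < k | (j < l)%N) _ in IHle IHeq *.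
set e := \det (1%:M + c *: (Z jl *m (Z jl)^T)).
have psdS : psdmx (c *: S).
  by apply: psdmxZ (ltW c_gt0) _; apply: psdmx_sum => j _; apply: psdmx_gram.
have e_gt0 : 0 < e := det_pdmx_gt0 (pdmx1D (psdmxZ (ltW c_gt0) (psdmx_gram _))).
have SZ0 : c *: S *m Z jl = 0 <-> forall j : 'I_k, (j < l)%N -> (Z j)^T *m Z jl = 0.
  rewrite -gram_sum_mulmx_eq0 -scalemxAl; split=> [/eqP|->]; last by rewrite scaler0.
  by rewrite scaler_eq0 gt_eqF // => /eqP.
have pairs_l : (forall j1 j2 : 'I_k, (j1 < j2 < l.+1)%N -> (Z j1)^T *m Z j2 = 0) <->
    (forall j1 j2 : 'I_k, (j1 < j2 < l)%N -> (Z j1)^T *m Z j2 = 0) /\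
    (forall j : 'I_k, (j < l)%N -> (Z j)^T *m Z jl = 0).
  split=> [ZZ0 | [ZZ0 ZZl0] j1 j2 /andP[lt12]]; first split=> [j1 j2 /andP[lt12 lt2]|j lt_jl].
  - by apply: ZZ0; rewrite lt12 ltnW.
  - by apply: ZZ0; rewrite lt_jl /=.
  rewrite ltnS leq_eqVlt => /orP[/eqP j2l|lt2]; last by apply: ZZ0; rewrite lt12.
  have -> : j2 = jl by apply: val_inj.
  by apply: ZZl0; rewrite -j2l.
have -> : 1%:M + c *: (Z jl *m (Z jl)^T + S) = 1%:M + c *: S + c *: (Z jl *m (Z jl)^T).
  by rewrite scalerDr addrCA addrC.
rewrite pairs_l -IHeq -SZ0.
have [le_det eq_det] := det1D_add_gram (Z jl) psdS c_gt0.
split; first by apply: le_trans le_det _; rewrite mulrC ler_pM2l.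
rewrite -eq_det; split=> [eqx | [-> eqx]]; last by rewrite eqx mulrC.
have eqS : \det (1%:M + c *: S) = P.
  by apply/eqP; rewrite eq_le IHle -(ler_pM2l e_gt0) -eqx mulrC.
by rewrite eqx eqS mulrC.
Qed.

(** * Concavity of the log-determinant *)

Lemma wsum1_inhabited (I : finType) (w : I -> R) : \sum_i w i = 1 -> exists i0 : I, true.
Proof.
case: (pickP (fun _ : I => true)) => [i0 _|none]; first by exists i0.
by rewrite big_pred0 // => /eqP; rewrite eq_sym oner_eq0.
Qed.

Lemma wvariance_eq0 (I : finType) (w x : I -> R) :
  (forall i, 0 < w i) -> \sum_i w i = 1 ->
  (\sum_i w i * x i) ^+ 2 = \sum_i w i * x i ^+ 2 -> forall i, x i = \sum_j w j * x j.
Proof.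
move=> w_gt0 w1 eq_sqr i; set mu := \sum_j w j * x j in eq_sqr *.
have : \sum_j w j * (x j - mu) ^+ 2 = 0.
  rewrite (eq_bigr (fun j => w j * x j ^+ 2 - 2 * mu * (w j * x j) + mu ^+ 2 * w j)).
    by rewrite big_split sumrB /= -!mulr_sumr -/mu -eq_sqr w1; ring.
  by move=> j _; ring.
move/eqP; rewrite psumr_eq0 => [/allP/(_ i (mem_index_enum _))|j _]; last first.
  by rewrite mulr_ge0 ?sqr_ge0 ?ltW.
by rewrite mulf_eq0 gt_eqF //= sqrf_eq0 subr_eq0 => /eqP.
Qed.

Lemma qform_wsum_schur_le n (I : finType) (w a : I -> R) (r : I -> 'rV[R]_n) D y :
  (forall i, 0 <= w i) -> (forall i, 0 < a i) -> 0 < \sum_i w i * a i ->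
  qform (\sum_i w i *: schur (a i) (r i) (D i)) y <=
  qform (schur (\sum_i w i * a i) (\sum_i w i *: r i) (\sum_i w i *: D i)) y.
Proof.
move=> w_ge0 a_gt0 ab_gt0; rewrite -qform_schur_min ?lt0r_neq0 // -symblk_wsum.
by rewrite !qform_sum; apply: ler_sum => i _; rewrite !qformZ ler_wpM2l ?qform_schur_le.
Qed.

(* Comparing the two forms at [y] gives equality in [(sum w_j x_j)^2 <= sum w_j x_j^2]
   for [x_j = r_j y]. *)
Lemma wsum_schur_eq n (I : finType) (w : I -> R) a (r : I -> 'rV[R]_n) D :
  (forall i, 0 < w i) -> \sum_i w i = 1 -> 0 < a ->
  \sum_i w i *: schur a (r i) (D i) = schur a (\sum_i w i *: r i) (\sum_i w i *: D i) ->
  forall i, r i = \sum_j w j *: r j.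
Proof.
move=> w_gt0 w1 a_gt0 eq_sch i; apply/subr0_eq/rV_eq0 => y.
set x := fun j => (r j *m y) 0 0.
have xE : ((\sum_j w j *: r j) *m y) 0 0 = \sum_j w j * x j.
  by rewrite mulmx_suml summxE; apply: eq_bigr => j _; rewrite -scalemxAl mxE.
have DE : qform (\sum_j w j *: D j) y = \sum_j w j * qform (D j) y.
  by rewrite qform_sum; apply: eq_bigr => j _; rewrite qformZ.
have schE : qform (\sum_j w j *: schur a (r j) (D j)) y =
    \sum_j w j * qform (D j) y - a^-1 * \sum_j w j * x j ^+ 2.
  rewrite qform_sum mulr_sumr -sumrB; apply: eq_bigr => j _.
  by rewrite qformZ qform_schur /x; ring.
have := congr1 (fun M => qform M y) eq_sch; rewrite /= schE qform_schur DE xE.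
move=> /addrI/oppr_inj/(mulfI (invr_neq0 (lt0r_neq0 a_gt0))) eq_sqr.
rewrite mulmxBl [LHS]mxE [X in _ + X]mxE xE.
by rewrite -(wvariance_eq0 w_gt0 w1 (esym eq_sqr) i) subrr.
Qed.

End SemidefiniteMatrices.

Section LogDeterminant.
Variable R : realType.

Lemma ln_le_subr1 (x : R) : 0 < x -> ln x <= x - 1.
Proof.
by move=> x_gt0; have := @le_ln1Dx R (x - 1); rewrite [1 + _]addrC subrK; apply; lra.
Qed.

Lemma ln_eq_subr1 (x : R) : 0 < x -> ln x = x - 1 -> x = 1.
Proof.
move=> x_gt0 lnx; have expK : expR (ln x) = x by rewrite lnK.
have [lnx0|lnx0] := eqVneq (ln x) 0; first by rewrite -expK lnx0 expR0.
by have := expR_gt1Dx lnx0; rewrite expK lnx addrC subrK ltxx.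
Qed.

Lemma jensen_ln (I : finType) (w a : I -> R) :
  (forall i, 0 < w i) -> \sum_i w i = 1 -> (forall i, 0 < a i) ->
  \sum_i w i * ln (a i) <= ln (\sum_i w i * a i) /\
  (\sum_i w i * ln (a i) = ln (\sum_i w i * a i) -> forall i, a i = \sum_j w j * a j).
Proof.
move=> w_gt0 w1 a_gt0; set mu := \sum_i w i * a i; have [i0 _] := wsum1_inhabited w1.
have mu_gt0 : 0 < mu.
  rewrite /mu (bigD1 i0) //= ltr_pwDl ?mulr_gt0 // sumr_ge0 // => i _.
  by rewrite ltW ?mulr_gt0.
(* The gap is [- sum_i w_i (t_i - 1 - ln t_i)] with [t_i = a_i / mu], since the
   [w_i (t_i - 1)] sum to zero. *)
pose g i := w i * (a i / mu - 1) - w i * ln (a i / mu).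
have g_ge0 i : 0 <= g i.
  by rewrite /g -mulrBr mulr_ge0 ?subr_ge0 ?ln_le_subr1 ?divr_gt0 // ltW.
have sum_t : \sum_i w i * (a i / mu - 1) = 0.
  rewrite (eq_bigr (fun i => w i * a i / mu - w i)) => [|i _]; last first.
    by rewrite mulrBr mulr1 mulrA.
  by rewrite sumrB -mulr_suml w1 divff ?subrr ?gt_eqF.
have gapE : \sum_i w i * ln (a i) - ln mu = - \sum_i g i.
  rewrite sumrB sum_t sub0r opprK -[ln mu]mul1r -w1 mulr_suml -sumrB.
  by apply: eq_bigr => i _; rewrite -mulrBr ln_div ?posrE.
split; first by rewrite -subr_le0 gapE oppr_le0 sumr_ge0.
move=> eq_ln i; have /eqP : \sum_i g i = 0 by rewrite -[LHS]opprK -gapE eq_ln subrr oppr0.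
rewrite psumr_eq0 // => /allP/(_ i (mem_index_enum _)).
rewrite /g -mulrBr mulf_eq0 gt_eqF //= subr_eq0 => /eqP/esym.
move/(ln_eq_subr1 (divr_gt0 (a_gt0 i) mu_gt0))/(congr1 ( *%R^~ mu)).
by rewrite mul1r divfK ?gt_eqF.
Qed.

Lemma ln_prod (I : finType) (f : I -> R) :
  (forall i, 0 < f i) -> ln (\prod_i f i) = \sum_i ln (f i).
Proof.
move=> f_gt0; elim: (index_enum I) => [|i s IH]; first by rewrite !big_nil ln1.
by rewrite !big_cons lnM ?IH // posrE ?prodr_gt0.
Qed.

Lemma ln_det_symblk n a (r : 'rV[R]_n) D : pdmx (symblk a r D) ->
  ln (\det (symblk a r D)) = ln a + ln (\det (schur a r D)).
Proof.
move=> /pdmx_symblk[a_gt0 /det_pdmx_gt0 d_gt0].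
by rewrite det_symblk ?gt_eqF // lnM ?posrE.
Qed.

(* Induction on the dimension through the Schur complement of the first entry: the
   first entries contribute a weighted AM-GM inequality, and the Schur complement of
   the average dominates the average of the Schur complements. *)
Lemma logdet_concave n (I : finType) (w : I -> R) (A : I -> 'M[R]_n) :
  (forall i, 0 < w i) -> \sum_i w i = 1 -> (forall i, pdmx (A i)) ->
  \sum_i w i * ln (\det (A i)) <= ln (\det (\sum_i w i *: A i)) /\
  (\sum_i w i * ln (\det (A i)) = ln (\det (\sum_i w i *: A i)) -> forall i j, A i = A j).
Proof.
elim: n I w A => [|n IH] I w A w_gt0 w1 pdA.
  rewrite det_mx00 ln1 big1 => [|i _]; last by rewrite det_mx00 ln1 mulr0.
  by split=> // _ i j; apply/matrixP => -[].
have [i0 _] := wsum1_inhabited w1.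
pose B i : 'M[R]_(1 + n) := A i.
pose a i := ulsubmx (B i) 0 0; pose r i := ursubmx (B i); pose D i := drsubmx (B i).
have EA i : A i = symblk (a i) (r i) (D i) := symblkE (proj1 (pdA i)).
have pdB i : pdmx (symblk (a i) (r i) (D i)) by rewrite -EA.
have a_gt0 i : 0 < a i := proj1 (pdmx_symblk (pdB i)).
have pd_sch i : pdmx (schur (a i) (r i) (D i)) := proj2 (pdmx_symblk (pdB i)).
set ab := \sum_i w i * a i; set rb := \sum_i w i *: r i; set Db := \sum_i w i *: D i.
have EAb : \sum_i w i *: A i = symblk ab rb Db.
  by rewrite -symblk_wsum; apply: eq_bigr => i _; rewrite EA.
have pdAb : pdmx (symblk ab rb Db) by rewrite -EAb; exact: pdmx_wsum i0 w_gt0 pdA.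
have [ab_gt0 pd_schb] := pdmx_symblk pdAb.
set Sb := \sum_i w i *: schur (a i) (r i) (D i).
have pdSb : pdmx Sb := pdmx_wsum i0 w_gt0 pd_sch.
have psdP : psdmx (schur ab rb Db - Sb).
  split=> [|y]; first by rewrite linearB /= (proj1 pd_schb) (proj1 pdSb).
  by rewrite qformB subr_ge0 qform_wsum_schur_le // => i; rewrite ltW.
have [le_det eq_det] := det_psdD pdSb psdP; rewrite addrC subrK in le_det eq_det.
have le_lnS : ln (\det Sb) <= ln (\det (schur ab rb Db)).
  by rewrite ler_ln ?posrE ?det_pdmx_gt0.
have [le_a eq_a] := jensen_ln w_gt0 w1 a_gt0.
have [le_sch eq_sch] := IH I w _ w_gt0 w1 pd_sch.
have -> : \sum_i w i * ln (\det (A i)) =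
    \sum_i w i * ln (a i) + \sum_i w i * ln (\det (schur (a i) (r i) (D i))).
  by rewrite -big_split; apply: eq_bigr => i _; rewrite EA ln_det_symblk // mulrDr.
rewrite EAb ln_det_symblk //; split=> [|eq_sum]; first lra.
have a_eq i : a i = ab by apply: eq_a; lra.
have Sb_eq : Sb = schur ab rb Db.
  apply/esym/subr0_eq/eq_det/ln_inj; rewrite ?posrE ?det_pdmx_gt0 //; lra.
have r_eq i : r i = rb.
  apply: (wsum_schur_eq (D := D) w_gt0 w1 ab_gt0); rewrite -Sb_eq.
  by apply: eq_bigr => j _; rewrite a_eq.
have := eq_sch _; rewrite -/Sb => /(_ ltac:(lra)) eq_ij i j.
have D_eq k : D k = schur ab rb (D k) + ab^-1 *: (rb^T *m rb) by rewrite subrK.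
by rewrite !EA !a_eq !r_eq (D_eq i) (D_eq j); move: (eq_ij i j); rewrite !a_eq !r_eq => ->.
Qed.

End LogDeterminant.

(** * Coding rates *)

Lemma logdet_rateE (R : realType) n p eps (Y : 'M[R]_(n, p)) :
  logdet_rate eps Y = ln (\det (1%:M + (n%:R / eps ^+ 2) *: (p%:R^-1 *: (Y *m Y^T)))).
Proof. by rewrite /logdet_rate scalerA invfM; congr (ln (\det (_ + _ *: _))); ring. Qed.

Lemma mxrow_gram_wmean (R : numFieldType) n k (m : 'I_k -> nat)
    (Z : forall j, 'M[R]_(n, m j)) : (forall j, 0 < m j)%N ->
  \sum_j ((m j)%:R / (\sum_j m j)%N%:R) *: ((m j)%:R^-1 *: (Z j *m (Z j)^T)) =
  (\sum_j m j)%N%:R^-1 *: ((\mxrow_j Z j) *m (\mxrow_j Z j)^T).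
Proof.
move=> m_gt0; rewrite tr_mxrow mul_mxrow_mxcol scaler_sumr; apply: eq_bigr => j _.
by rewrite scalerA mulrAC divff ?mul1r // pnatr_eq0 -lt0n.
Qed.

Lemma logdet_rate_mxrow_ge (R : realType) n k (m : 'I_k -> nat)
    (Z : forall j, 'M[R]_(n, m j)) eps :
  (0 < k)%N -> (0 < n)%N -> (forall j, 0 < m j)%N -> 0 < eps ->
  \sum_j (m j)%:R * logdet_rate eps (Z j) <=
    (\sum_j m j)%N%:R * logdet_rate eps (\mxrow_j Z j) /\
  (\sum_j (m j)%:R * logdet_rate eps (Z j) =
    (\sum_j m j)%N%:R * logdet_rate eps (\mxrow_j Z j) <->
   forall i j, (m i)%:R^-1 *: (Z i *m (Z i)^T) = (m j)%:R^-1 *: (Z j *m (Z j)^T)).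
Proof.
move=> k_gt0 n_gt0 m_gt0 eps_gt0; set M := (\sum_j m j)%N.
have M_gt0 : 0 < M%:R :> R by rewrite ltr0n /M (bigD1 (Ordinal k_gt0)) //= ltn_addr.
set kappa : R := n%:R / eps ^+ 2.
have kappa_gt0 : 0 < kappa by rewrite divr_gt0 ?ltr0n ?exprn_gt0.
pose G j := (m j)%:R^-1 *: (Z j *m (Z j)^T); pose A j := 1%:M + kappa *: G j.
pose w j : R := (m j)%:R / M%:R.
have w_gt0 j : 0 < w j by rewrite divr_gt0 // ltr0n m_gt0.
have w1 : \sum_j w j = 1 by rewrite -mulr_suml -natr_sum divff ?gt_eqF.
have pdA j : pdmx (A j).
  apply/pdmx1D/(psdmxZ (ltW kappa_gt0))/psdmxZ; last exact: psdmx_gram.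
  by rewrite invr_ge0 ler0n.
have wsumA : \sum_j w j *: A j =
    1%:M + kappa *: (M%:R^-1 *: ((\mxrow_j Z j) *m (\mxrow_j Z j)^T)).
  under [\sum_j w j *: A j]eq_bigr do rewrite scalerDr.
  rewrite big_split /= -scaler_suml w1 scale1r -mxrow_gram_wmean // scaler_sumr.
  congr (_ + _); apply: eq_bigr => j _.
  by rewrite /G /w -/M !scalerA; congr (_ *: _); ring.
have [le_ln eq_ln] := logdet_concave w_gt0 w1 pdA.
rewrite logdet_rateE -wsumA (eq_bigr (fun j => M%:R * (w j * ln (\det (A j))))); last first.
  by move=> j _; rewrite logdet_rateE /w mulrA mulrCA divff ?gt_eqF ?mulr1.
rewrite -mulr_sumr ler_pM2l //; split=> //.
split=> [/(mulfI (lt0r_neq0 M_gt0))/eq_ln eqA i j|eqG].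
  by have := eqA i j; rewrite /A => /addrI/scalerI; apply; rewrite gt_eqF.
have [j0 _] := wsum1_inhabited w1; have eqA j : A j = A j0 by rewrite /A /G (eqG j j0).
under eq_bigr do rewrite eqA; under [\sum_j w j *: A j]eq_bigr do rewrite eqA.
have wsum_const (x : R) : \sum_j w j * x = x by rewrite -mulr_suml w1 mul1r.
by rewrite wsum_const -scaler_suml w1 scale1r.
Qed.

Lemma logdet_mxrow_le_sum (R : realType) n k (m : 'I_k -> nat)
    (Z : forall j, 'M[R]_(n, m j)) c : 0 < c ->
  ln (\det (1%:M + c *: ((\mxrow_j Z j) *m (\mxrow_j Z j)^T))) <=
    \sum_j ln (\det (1%:M + c *: (Z j *m (Z j)^T))) /\
  (ln (\det (1%:M + c *: ((\mxrow_j Z j) *m (\mxrow_j Z j)^T))) =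
    \sum_j ln (\det (1%:M + c *: (Z j *m (Z j)^T))) <->
   forall j1 j2 : 'I_k, (j1 < j2)%N -> (Z j1)^T *m Z j2 = 0).
Proof.
move=> c_gt0; have [le_det eq_det] := det1D_gram_sum_prefix Z c_gt0 (leqnn k).
have lt_k (j : 'I_k) : (j < k)%N = true := ltn_ord j.
rewrite !(eq_bigl _ _ lt_k) in le_det eq_det.
have d_gt0 j : 0 < \det (1%:M + c *: (Z j *m (Z j)^T)).
  exact/det_pdmx_gt0/pdmx1D/(psdmxZ (ltW c_gt0))/psdmx_gram.
have dsum_gt0 : 0 < \det (1%:M + c *: \sum_j Z j *m (Z j)^T).
  apply/det_pdmx_gt0/pdmx1D/(psdmxZ (ltW c_gt0))/psdmx_sum => j _; exact: psdmx_gram.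
rewrite tr_mxrow mul_mxrow_mxcol -ln_prod // ler_ln ?posrE ?prodr_gt0 //.
split=> //; split=> [eq_ln j1 j2 lt12 | ZZ0]; last first.
  by rewrite (proj2 eq_det) // => j1 j2 /andP[lt12 _]; apply: ZZ0.
apply: (proj1 eq_det); last by rewrite lt12 /=.
by apply: ln_inj; rewrite ?posrE ?prodr_gt0.
Qed.

Theorem mainTheorem2 (R : realType) (n k : nat) (m : 'I_k -> nat)
  (Z : forall j : 'I_k, 'M[R]_(n, m j)) (eps : R) :
  (1 <= k)%N -> (forall j, (1 <= m j)%N) -> 0 < eps ->
  let M := (\sum_(j < k) m j)%N in
  let Zc : 'M[R]_(n, M) := \mxrow_(j < k) Z j in
  let lhs := \sum_(j < k) ((m j)%:R / 2) * logdet_rate eps (Z j) in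
  let mid := (M%:R / 2) * logdet_rate eps Zc in
  let rhs := \sum_(j < k) (M%:R / 2) *
               ln (\det (1%:M + (n%:R / (M%:R * eps ^+ 2)) *: (Z j *m (Z j)^T))) in
  [/\ lhs <= mid, mid <= rhs,
      lhs = mid <-> (forall i j : 'I_k,
          (m i)%:R^-1 *: (Z i *m (Z i)^T) = (m j)%:R^-1 *: (Z j *m (Z j)^T)) &
      mid = rhs <-> (forall j1 j2 : 'I_k, (j1 < j2)%N -> (Z j1)^T *m Z j2 = 0)].
Proof.
move=> k_gt0 m_gt0 eps_gt0 M Zc lhs mid rhs.
have [n0|n_gt0] := posnP n.
  move: Z @Zc @lhs @mid @rhs; rewrite n0 => Z Zc lhs mid rhs.
  have ln_det0 (A : 'M[R]_0) : ln (\det A) = 0 by rewrite det_mx00 ln1.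
  rewrite /rhs /mid /lhs /logdet_rate !ln_det0 !big1 => [|j _|j _]; rewrite ?ln_det0 ?mulr0 //.
  split=> //; split=> // _; first by move=> i j; apply/matrixP => -[].
  by move=> j1 j2 _; apply/matrixP => a b; rewrite !mxE big_ord0.
have M_gt0 : 0 < M%:R :> R by rewrite ltr0n /M (bigD1 (Ordinal k_gt0)) //= ltn_addr.
have c_gt0 : 0 < n%:R / (M%:R * eps ^+ 2) :> R.
  by rewrite divr_gt0 ?ltr0n // mulr_gt0 // exprn_gt0.
have [le1 eq1] := logdet_rate_mxrow_ge Z k_gt0 n_gt0 m_gt0 eps_gt0.
have [le2 eq2] := logdet_mxrow_le_sum Z c_gt0.
have lhsE : lhs = 2^-1 * \sum_j (m j)%:R * logdet_rate eps (Z j).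
  by rewrite /lhs mulr_sumr; apply: eq_bigr => j _; rewrite mulrA [2^-1 * _]mulrC.
have midE : mid = 2^-1 * (M%:R * logdet_rate eps Zc) by rewrite mulrA [2^-1 * _]mulrC.
have half_gt0 : 0 < 2^-1 :> R by rewrite invr_gt0.
have Mhalf_gt0 : 0 < M%:R / 2 :> R by rewrite divr_gt0.
split.
- by rewrite lhsE midE ler_pM2l.
- by rewrite /rhs -mulr_sumr /mid /logdet_rate ler_pM2l.
- by rewrite lhsE midE -eq1; split=> [/(mulfI (lt0r_neq0 half_gt0))|->].
- rewrite /rhs -mulr_sumr /mid /logdet_rate -eq2.
  by split=> [/(mulfI (lt0r_neq0 Mhalf_gt0))|->].
Qed.
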